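(* Consider any instance with $n$ agents with monotone valuations and $m=n+2$ goods. For each agent $i\in N$ there exists an EFX allocation $\mathcal{A}=(A_1,\dots,A_n)$ in which every agent receives at least one good and either (1) $|A_i|=3$; or (2) there is an agent $j\neq i$ with $|A_i|=|A_j|=2$ such that for some $k\in\{i,j\}$, agent $k$ receives a good $g\in A_k$ with $v_k(\{g\})\ge v_k(\{g'\})$ for all $g'\in A_i\cup A_j$. *)

From mathcomp Require Import all_boot all_order all_algebra.
Set Implicit Arguments. Unset Strict Implicit. Unset Printing Implicit Defensive.
Import Order.TTheory GRing.Theory Num.Theory.
Local Open Scope ring_scope.

Definition valuation (R : numDomainType) (n m : nat) :=
  'I_n -> {set 'I_m} -> R.

Definition monotone_valuations (R : numDomainType) (n m : nat)
    (v : valuation R n m) : Prop :=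
  (forall i, v i set0 = 0) /\
  (forall i (S T : {set 'I_m}), S \subset T -> v i S <= v i T).

Definition allocation (n m : nat) (A : 'I_n -> {set 'I_m}) : Prop :=
  (forall i j, i != j -> [disjoint A i & A j]) /\
  (forall g : 'I_m, exists i, g \in A i).

Definition EFX (R : numDomainType) (n m : nat) (v : valuation R n m)
    (A : 'I_n -> {set 'I_m}) : Prop :=
  forall i j, forall g, g \in A j -> v i (A j :\ g) <= v i (A i).

Definition EFX_allocation (R : numDomainType) (n m : nat) (v : valuation R n m)
    (A : 'I_n -> {set 'I_m}) : Prop :=
  allocation A /\ EFX v A.

From mathcomp Require Import all_boot all_order all_algebra zify.
Import Order.TTheory GRing.Theory Num.Theory.
Set Implicit Arguments. Unset Strict Implicit. Unset Printing Implicit Defensive.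
Local Open Scope ring_scope.

(* Let all agents other than i and some q pick, one after the other, their
   favourite remaining good.  Four goods remain; let t be q's favourite among
   them and W the other three.  Unless one of (i : W, q : {t}),
   (i : W - y, q : {t, y}) or (i : {t, y}, q : W - y) is EFX of the required
   shape, i and q both strictly prefer t to every W - y, and some picker m
   strictly prefers some W - y to its pick.  Then m takes over q's role and q
   picks last instead: the new pool is W plus one good that m values at most
   as much as its old pick.  If this order fails too, m strictly prefers its
   new favourite t' to every W - y, so t' is not the added good; thus t' is in
   W and i values t' strictly less than t.  This cannot go on forever. *)

Section Favourite.
Variables (R : realDomainType) (T : finType) (u : T -> R) (t0 : T).

(* Ordering goods by value, then by enumeration rank, makes favourites unique;
   this is what keeps serial dictatorship stable when one good is added. *)
Definition rank_by (x : T) : nat :=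
  (#|[set y | (u y < u x)%R]| * #|T| + enum_rank x)%N.

Lemma rank_by_mod x : (rank_by x %% #|T|)%N = enum_rank x.
Proof. by rewrite /rank_by modnMDl modn_small. Qed.

Lemma rank_by_inj : injective rank_by.
Proof.
move=> x y /(congr1 (modn^~ #|T|)); rewrite !rank_by_mod => /val_inj.
exact: enum_rank_inj.
Qed.

Lemma rank_by_lt x y : u x < u y -> (rank_by x < rank_by y)%N.
Proof.
move=> lt_xy.
have : [set z | u z < u x] \proper [set z | u z < u y].
  apply/properP; split; last by exists x; rewrite !inE ?ltxx.
  by apply/subsetP => z; rewrite !inE => /lt_trans; apply.
move/proper_card; rewrite /rank_by => lt_card.
apply: (@leq_trans (#|[set z | (u z < u x)%R]|.+1 * #|T|)).
  by rewrite mulSn addnC ltn_add2r ltn_ord.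
by apply: leq_trans (leq_addr _ _); rewrite leq_mul2r lt_card orbT.
Qed.

Lemma rank_by_le x y : (rank_by x <= rank_by y)%N -> u x <= u y.
Proof. by rewrite leNgt; apply: contraTN => /rank_by_lt; rewrite -ltnNge. Qed.

Definition favourite (S : {set T}) : T := [arg max_(x > t0 in S) rank_by x].

Lemma favouriteP (S : {set T}) y : y \in S ->
  favourite S \in S /\
  forall z, z \in S -> (rank_by z <= rank_by (favourite S))%N.
Proof.
move=> yS; rewrite /favourite /arg_max /extremum.
case: pickP => [x /andP [xS /forallP max_x] | none].
  by split=> // z zS; have := max_x z; rewrite zS.
case: (arg_maxnP rank_by yS) => x xS max_x.
have /negP[] := none x; apply/andP; split=> //; apply/forallP => z.
by apply/implyP; apply: max_x.
Qed.

Lemma favourite_in (S : {set T}) y : y \in S -> favourite S \in S.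
Proof. by case/favouriteP. Qed.

Lemma favourite_max (S : {set T}) y : y \in S -> u y <= u (favourite S).
Proof. by move=> yS; apply: rank_by_le; case: (favouriteP yS) => _; apply. Qed.

Lemma favourite_setU1 e (X : {set T}) :
  favourite (e |: X) != e -> favourite (e |: X) = favourite X.
Proof.
set b := favourite _ => be.
have [eX_b max_b] := favouriteP (setU11 e X).
have bX : b \in X by move: eX_b; rewrite in_setU1 (negbTE be).
have [cX max_c] := favouriteP bX.
apply: rank_by_inj; apply/eqP; rewrite eqn_leq max_c // max_b //.
by rewrite in_setU1 cX orbT.
Qed.

End Favourite.

Section SerialDictatorship.
Variables (R : realDomainType) (I : eqType) (T : finType).
Variables (u : I -> T -> R) (t0 : T).
Local Notation fav a := (favourite (u a) t0).
Implicit Types (S X : {set T}) (s : seq I).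

Fixpoint sd_pool (s : seq I) (S : {set T}) : {set T} :=
  if s is a :: s' then sd_pool s' (S :\ fav a S) else S.

Fixpoint sd_pick (s : seq I) (S : {set T}) (m : I) : T :=
  if s is a :: s' then
    if a == m then fav a S else sd_pick s' (S :\ fav a S) m
  else t0.

Lemma sd_pool_cat s1 s2 S : sd_pool (s1 ++ s2) S = sd_pool s2 (sd_pool s1 S).
Proof. by elim: s1 S => //= a s1 IH S. Qed.

Lemma sd_pool_sub s S : sd_pool s S \subset S.
Proof.
elim: s S => [|a s IH] S /=; first exact: subxx.
exact: subset_trans (IH _) (subD1set _ _).
Qed.

Lemma sd_fits_cons a s S : (size (a :: s) <= #|S|)%N ->
  fav a S \in S /\ (size s <= #|S :\ fav a S|)%N.
Proof.
move=> fits; have /card_gt0P [y yS] : (0 < #|S|)%N by apply: leq_trans fits.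
have aS := favourite_in (u a) t0 yS.
by split=> //; move: fits; rewrite (cardsD1 (fav a S)) aS.
Qed.

Lemma sd_pool_card s S :
  (size s <= #|S|)%N -> #|sd_pool s S| = (#|S| - size s)%N.
Proof.
elim: s S => [|a s IH] S fits /=; first by rewrite subn0.
have [aS fits'] := sd_fits_cons fits.
by rewrite IH // (cardsD1 (fav a S) S) aS add1n subSS.
Qed.

Lemma sd_pick_mid s1 m s2 S : m \notin s1 ->
  sd_pick (s1 ++ m :: s2) S m = fav m (sd_pool s1 S).
Proof.
elim: s1 S => [|a s1 IH] S /=; first by rewrite eqxx.
by rewrite inE negb_or eq_sym => /andP [/negbTE -> /IH].
Qed.

Lemma sd_pick_in s S m : m \in s -> (size s <= #|S|)%N ->
  sd_pick s S m \in S :\: sd_pool s S.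
Proof.
elim: s S => [|a s IH] S // ms fits /=; rewrite inE in ms.
have [aS fits'] := sd_fits_cons fits.
have sub := sd_pool_sub s (S :\ fav a S).
case: eqP => [_ | /eqP am].
  by rewrite inE aS andbT; apply/negP => /(subsetP sub); rewrite setD11.
rewrite eq_sym (negbTE am) in ms.
by move: (IH _ ms fits'); rewrite !inE => /and3P [-> _ ->].
Qed.

Lemma sd_pick_neq s S m1 m2 : uniq s -> m1 \in s -> m2 \in s -> m1 != m2 ->
  (size s <= #|S|)%N -> sd_pick s S m1 != sd_pick s S m2.
Proof.
elim: s S => [|a s IH] S //= /andP [as_ us]; rewrite !inE => m1s m2s m12 fits.
have [aS fits'] := sd_fits_cons (a := a) fits.
have later m : m \in s -> sd_pick s (S :\ fav a S) m != fav a S.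
  by move=> ms; move: (sd_pick_in ms fits'); rewrite !inE => /andP [_ /andP []].
case: (eqVneq a m1) => [a1 | a1]; case: (eqVneq a m2) => [a2 | a2].
- by rewrite -a1 -a2 eqxx in m12.
- by rewrite eq_sym (negbTE a2) in m2s; rewrite eq_sym later.
- by rewrite eq_sym (negbTE a1) in m1s; rewrite later.
- rewrite eq_sym (negbTE a1) in m1s; rewrite eq_sym (negbTE a2) in m2s.
  exact: IH.
Qed.

Lemma sd_pick_max s S m x : m \in s -> x \in sd_pool s S ->
  u m x <= u m (sd_pick s S m).
Proof.
elim: s S => [|a s IH] S //=; rewrite inE => ms xP.
case: eqP => [am | /eqP am].
  rewrite -am; apply: favourite_max.
  by move/(subsetP (sd_pool_sub _ _)): xP; rewrite inE => /andP [].
by rewrite eq_sym (negbTE am) in ms; apply: IH xP.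
Qed.

Lemma sd_pick_cover s S x : uniq s -> x \in S ->
  x \in sd_pool s S \/ exists2 m, m \in s & sd_pick s S m = x.
Proof.
elim: s S => [|a s IH] S /=; first by left.
case/andP => as_ us xS; case: (eqVneq x (fav a S)) => [xa | xa].
  by right; exists a; rewrite ?inE ?eqxx.
have : x \in S :\ fav a S by rewrite !inE xa.
case/(IH _ us) => [| [m ms <-]]; first by left.
have am : a != m by apply: contraNneq as_ => ->.
by right; exists m; rewrite ?inE ?ms ?orbT // (negbTE am).
Qed.

Lemma sd_pool_setU1 s e X : e \notin X -> (size s <= #|X|)%N ->
  exists2 z, z \in e |: X &
    z \notin sd_pool s X /\ sd_pool s (e |: X) = z |: sd_pool s X.
Proof.
elim: s e X => [|a s IH] e X eX fits /=; first by exists e; rewrite ?setU11.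
have [aX fits'] := sd_fits_cons fits.
have bX' : fav a X \notin X :\ fav a X by rewrite setD11.
case: (eqVneq (fav a (e |: X)) e) => [-> | b'e].
  rewrite setU1K //; have [z zX zP] := IH _ _ bX' fits'.
  by rewrite setD1K // in zX zP; exists z; rewrite // in_setU1 zX orbT.
have eX' : e \notin X :\ fav a X by rewrite inE negb_and eX orbT.
have -> : (e |: X) :\ fav a (e |: X) = e |: (X :\ fav a X).
  have b'b := favourite_setU1 b'e; rewrite b'b in b'e *.
  apply/setP => x; rewrite !inE.
  by case: (eqVneq x e) => // ->; rewrite eq_sym b'e.
have [z zX [zP ->]] := IH _ _ eX' fits'.
exists z => //; move: zX; rewrite !inE => /orP [-> // | /andP [_ ->]].
by rewrite orbT.
Qed.

Lemma sd_pool_drop s1 m s2 S : (size (s1 ++ m :: s2) <= #|S|)%N ->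
  exists2 z, z \in sd_pool s1 S & z \notin sd_pool (s1 ++ m :: s2) S /\
    sd_pool (s1 ++ s2) S = z |: sd_pool (s1 ++ m :: s2) S.
Proof.
rewrite size_cat => fits; rewrite !sd_pool_cat /=; set X := sd_pool s1 S.
have fitsX : (size (m :: s2) <= #|X|)%N.
  by rewrite sd_pool_card ?leq_subRL // (leq_trans (leq_addr _ _) fits).
have [mX fits'] := sd_fits_cons fitsX.
have [z] := sd_pool_setU1 (negbT (setD11 (fav m X) X)) fits'.
by rewrite setD1K //; exists z.
Qed.

End SerialDictatorship.

Lemma cards2D1 (T : finType) (A : {set T}) g : #|A| = 2%N -> g \in A ->
  exists2 y, y \in A & A :\ g = [set y].
Proof.
move=> A2 gA; have /cards1P [y Ay] : #|A :\ g| == 1%N.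
  by rewrite -(eqn_add2l (g \in A)) -cardsD1 gA A2.
by exists y; rewrite // -(setD1K gA) Ay !inE eqxx orbT.
Qed.

Section MonotoneValuations.
Variables (R : numDomainType) (n m : nat) (v : valuation R n m).
Hypothesis hv : monotone_valuations v.
Implicit Types S T : {set 'I_m}.

Lemma valuation_le a S T : S \subset T -> v a S <= v a T.
Proof. by case: hv => _; apply. Qed.

Lemma valuation_ge0 a S : 0 <= v a S.
Proof. by case: hv => v0 _; rewrite -(v0 a) valuation_le ?sub0set. Qed.

Lemma valuation_set1_le a x S : x \in S -> v a [set x] <= v a S.
Proof. by move=> xS; rewrite valuation_le ?sub1set. Qed.

Lemma valuation_set1D1 a x g S : g \in [set x] -> v a ([set x] :\ g) <= v a S.
Proof.
by case: hv => v0 _; rewrite inE => /eqP ->; rewrite setDv v0 valuation_ge0.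
Qed.

End MonotoneValuations.

Section TwoExtraGoods.
Variables (R : realDomainType) (n : nat) (v : valuation R n (n + 2)).
Hypothesis hv : monotone_valuations v.
Variable i : 'I_n.

Local Notation G := 'I_(n + 2).
Implicit Types (s : seq 'I_n) (q m : 'I_n) (Ai Aq : {set G}).

Definition v1 a (x : G) := v a [set x].
Definition g0 : G := Ordinal (ltn_addl n (isT : 0 < 2)%N).

Local Notation fav a S := (favourite (v1 a) g0 S).
Local Notation pool s := (sd_pool v1 g0 s setT).
Local Notation pick s m := (sd_pick v1 g0 s setT m).

Definition order_for s q := perm_eq (i :: q :: s) (enum 'I_n).

Definition top s q := fav q (pool s).
Definition rest s q := pool s :\ top s q.

Definition alloc s q Ai Aq : 'I_n -> {set G} :=
  fun m => if m == i then Ai else if m == q then Aq else [set pick s m].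

Definition good_allocation (A : 'I_n -> {set G}) : Prop :=
  EFX_allocation v A /\ (forall k, A k != set0) /\
  (#|A i| = 3%N \/
   exists j : 'I_n, j != i /\ #|A i| = 2%N /\ #|A j| = 2%N /\
     exists k : 'I_n, (k = i \/ k = j) /\
       exists2 g, g \in A k &
         forall g', g' \in A i :|: A j -> v k [set g'] <= v k [set g]).

Section Order.
Variables (s : seq 'I_n) (q : 'I_n).
Hypothesis ord_sq : order_for s q.

Lemma order_forP : [/\ q != i, i \notin s, q \notin s & uniq s].
Proof.
have := perm_uniq ord_sq; rewrite enum_uniq /= inE negb_or.
by case/and3P => /andP [iq ->] -> ->; rewrite eq_sym.
Qed.

Lemma order_for_mem a : a != i -> a != q -> a \in s.
Proof.
by have := perm_mem ord_sq a; rewrite mem_enum !inE => /orP [->|/orP [->|]].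
Qed.

Lemma order_for_size : (size s + 2 = n)%N.
Proof. by have := perm_size ord_sq; rewrite size_enum_ord /= addn2. Qed.

Lemma order_fits : (size s <= #|[set: G]|)%N.
Proof. by rewrite cardsT card_ord; have := order_for_size; lia. Qed.

Lemma pool_card : #|pool s| = 4%N.
Proof.
rewrite sd_pool_card ?order_fits // cardsT card_ord.
by have := order_for_size; set k := size s; lia.
Qed.

Lemma top_in : top s q \in pool s.
Proof.
have /card_gt0P [y yP] : (0 < #|pool s|)%N by rewrite pool_card.
by rewrite /top (favourite_in (v1 q) g0 yP).
Qed.

Lemma top_max g : g \in pool s -> v1 q g <= v1 q (top s q).
Proof. exact: favourite_max. Qed.

Lemma rest_card : #|rest s q| = 3%N.
Proof.
apply/eqP; rewrite -(eqn_add2l (top s q \in pool s)) -cardsD1.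
by rewrite top_in pool_card.
Qed.

Lemma rest_other x : exists2 y, y \in rest s q & y != x.
Proof.
have /card_gt1P [a [b [ar br ab]]] : (1 < #|rest s q|)%N by rewrite rest_card.
by case: (eqVneq a x) => [<- | ax]; [exists b; rewrite // eq_sym | exists a].
Qed.

Lemma rest_sub : rest s q \subset pool s.
Proof. exact: subD1set. Qed.

Lemma pick_notin_pool m : m \in s -> pick s m \notin pool s.
Proof.
by move=> ms; have := sd_pick_in v1 g0 ms order_fits; rewrite inE => /andP [].
Qed.

Lemma alloc_i Ai Aq : alloc s q Ai Aq i = Ai.
Proof. by rewrite /alloc eqxx. Qed.

Lemma alloc_q Ai Aq : alloc s q Ai Aq q = Aq.
Proof. by case: order_forP => qi _ _ _; rewrite /alloc (negbTE qi) eqxx. Qed.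

Lemma alloc_allocation Ai Aq : Ai :|: Aq = pool s -> [disjoint Ai & Aq] ->
  allocation (alloc s q Ai Aq).
Proof.
move=> AiAq dAiAq; have [qi iNs qNs us] := order_forP.
have Aip : Ai \subset pool s by rewrite -AiAq subsetUl.
have Aqp : Aq \subset pool s by rewrite -AiAq subsetUr.
have pick_out m (X : {set G}) : X \subset pool s -> m != i -> m != q ->
    [disjoint [set pick s m] & X].
  move=> Xp mi mq; rewrite disjoints1; apply: contra (subsetP Xp _) _.
  exact: pick_notin_pool (order_for_mem mi mq).
split=> [a b ab | g].
  rewrite /alloc.
  case: (eqVneq a i) => [ai | ai]; case: (eqVneq b i) => [bi | bi].
  - by rewrite ai bi eqxx in ab.
  - by case: (eqVneq b q) => [// | bq]; rewrite disjoint_sym pick_out.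
  - by case: (eqVneq a q) => [_ | aq]; [rewrite disjoint_sym | apply: pick_out].
  case: (eqVneq a q) => [aq | aq]; case: (eqVneq b q) => [bq | bq].
  - by rewrite aq bq eqxx in ab.
  - by rewrite disjoint_sym pick_out.
  - exact: pick_out.
  rewrite disjoints1 inE sd_pick_neq ?order_fits //; exact: order_for_mem.
have [gP | gP] := boolP (g \in pool s).
  move: gP; rewrite -AiAq => /setUP [gAi | gAq].
    by exists i; rewrite alloc_i.
  by exists q; rewrite alloc_q.
have [/(negP gP) // | [m ms <-]] := sd_pick_cover v1 g0 us (in_setT g).
have mi : m != i by apply: contraNneq iNs => <-.
have mq : m != q by apply: contraNneq qNs => <-.
by exists m; rewrite /alloc (negbTE mi) (negbTE mq) set11.
Qed.

Lemma alloc_EFX Ai Aq :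
  (forall m g, m \in s -> g \in Ai -> v m (Ai :\ g) <= v1 m (pick s m)) ->
  (forall m g, m \in s -> g \in Aq -> v m (Aq :\ g) <= v1 m (pick s m)) ->
  (forall g, g \in Aq -> v i (Aq :\ g) <= v i Ai) ->
  (forall g, g \in Ai -> v q (Ai :\ g) <= v q Aq) ->
  EFX v (alloc s q Ai Aq).
Proof.
move=> envyAi envyAq envy_iAq envy_qAi a b g; rewrite /alloc.
have own (X : {set G}) : g \in X -> v a (X :\ g) <= v a X.
  by move=> _; exact/valuation_le/subD1set.
case: (eqVneq b i) => [_ | bi].
  case: (eqVneq a i) => [_ | ai]; first exact: own.
  case: (eqVneq a q) => [-> | aq]; first exact: envy_qAi.
  exact/envyAi/order_for_mem.
case: (eqVneq b q) => [_ | bq]; last exact: valuation_set1D1.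
case: (eqVneq a i) => [-> | ai]; first exact: envy_iAq.
case: (eqVneq a q) => [_ | aq]; first exact: own.
exact/envyAq/order_for_mem.
Qed.

Lemma alloc_nonempty Ai Aq : Ai != set0 -> Aq != set0 ->
  forall k, alloc s q Ai Aq k != set0.
Proof.
move=> Ai0 Aq0 k; rewrite /alloc; case: ifP => // _; case: ifP => // _.
by apply/set0Pn; exists (pick s k); rewrite set11.
Qed.

Lemma rest_split y : y \in rest s q ->
  [/\ (rest s q :\ y) :|: [set top s q; y] = pool s,
      [disjoint rest s q :\ y & [set top s q; y]],
      #|rest s q :\ y| = 2%N & #|[set top s q; y]| = 2%N].
Proof.
move=> yr; have yt : y != top s q by move: yr; rewrite !inE => /andP [].
split.
- by rewrite setUC -setUA setD1K // setD1K ?top_in.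
- apply/pred0P => x; rewrite /= !inE.
  by case: (eqVneq x y); case: (eqVneq x (top s q)); rewrite ?andbF.
- by have := cardsD1 y (rest s q); rewrite yr rest_card; lia.
- by rewrite cards2 eq_sym yt.
Qed.

Lemma good_three_one :
  (forall m g, m \in s -> g \in rest s q ->
     v m (rest s q :\ g) <= v1 m (pick s m)) ->
  (forall g, g \in rest s q -> v q (rest s q :\ g) <= v1 q (top s q)) ->
  exists A, good_allocation A.
Proof.
move=> envy_s envy_q.
exists (alloc s q (rest s q) [set top s q]); split; [split | split].
- apply: alloc_allocation; first by rewrite setUC setD1K ?top_in.
  by rewrite disjoint_sym disjoints1 setD11.
- by apply: alloc_EFX envy_s _ _ envy_q => [m g _ | g]; apply: valuation_set1D1.
- by apply: alloc_nonempty; rewrite -card_gt0 ?rest_card ?cards1.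
- by left; rewrite alloc_i rest_card.
Qed.

Lemma good_two_two Ai Aq : Ai :|: Aq = pool s -> [disjoint Ai & Aq] ->
  #|Ai| = 2%N -> #|Aq| = 2%N ->
  (forall y, y \in Aq -> v1 i y <= v i Ai) ->
  (forall y, y \in Ai -> v1 q y <= v q Aq) ->
  (exists2 g, g \in Ai & forall g', g' \in pool s -> v1 i g' <= v1 i g) \/
  (exists2 g, g \in Aq & forall g', g' \in pool s -> v1 q g' <= v1 q g) ->
  exists A, good_allocation A.
Proof.
move=> AiAq dAiAq Ai2 Aq2 envy_i envy_q top_g; have [qi _ _ _] := order_forP.
have pair_envy (X : {set G}) m g : #|X| = 2%N -> X \subset pool s ->
    m \in s -> g \in X -> v m (X :\ g) <= v1 m (pick s m).
  move=> X2 Xp ms gX; have [y yX ->] := cards2D1 X2 gX.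
  exact/sd_pick_max/(subsetP Xp).
exists (alloc s q Ai Aq); split; [split | split].
- exact: alloc_allocation.
- apply: alloc_EFX => [m g | m g | g gAq | g gAi].
  + by apply: pair_envy; rewrite // -AiAq subsetUl.
  + by apply: pair_envy; rewrite // -AiAq subsetUr.
  + by have [y yAq ->] := cards2D1 Aq2 gAq; apply: envy_i.
  + by have [y yAi ->] := cards2D1 Ai2 gAi; apply: envy_q.
- by apply: alloc_nonempty; rewrite -card_gt0 ?Ai2 ?Aq2.
right; exists q; rewrite alloc_i alloc_q AiAq; do !split=> //.
case: top_g => [[g gAi top_i] | [g gAq top_q]].
  by exists i; split; [left | exists g; rewrite ?alloc_i].
by exists q; split; [right | exists g; rewrite ?alloc_q].
Qed.

Lemma good_i_takes_rest y : y \in rest s q ->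
  v1 i (top s q) <= v i (rest s q :\ y) -> v1 i y <= v i (rest s q :\ y) ->
  exists A, good_allocation A.
Proof.
move=> yr ti yi; have [split_pool disj rest2 pair2] := rest_split yr.
apply: (good_two_two split_pool disj rest2 pair2).
- by move=> z; rewrite !inE => /orP [] /eqP ->.
- move=> z zr; apply: le_trans (valuation_set1_le hv _ (setU11 _ _)).
  by apply: top_max; rewrite -split_pool inE zr.
- by right; exists (top s q); rewrite ?setU11 // => g' /top_max.
Qed.

Lemma good_i_takes_top y : y \in rest s q ->
  v1 q (top s q) <= v q (rest s q :\ y) ->
  (forall g, g \in pool s -> v1 i g <= v1 i (top s q)) ->
  exists A, good_allocation A.
Proof.
move=> yr tq top_i; have [split_pool disj rest2 pair2] := rest_split yr.
rewrite setUC disjoint_sym in split_pool disj.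
apply: (good_two_two split_pool disj pair2 rest2).
- move=> z zr; apply: le_trans (valuation_set1_le hv _ (setU11 _ _)).
  by apply: top_i; rewrite -split_pool inE zr orbT.
- move=> z; rewrite !inE => /orP [] /eqP -> //.
  by apply: le_trans tq; apply/top_max/(subsetP rest_sub).
- by left; exists (top s q); rewrite ?setU11.
Qed.

Definition stuck : Prop :=
  [/\ forall y, y \in rest s q -> v q (rest s q :\ y) < v1 q (top s q),
      forall y, y \in rest s q -> v i (rest s q :\ y) < v1 i (top s q) &
      exists m y, [/\ m \in s, y \in rest s q &
                     v1 m (pick s m) < v m (rest s q :\ y)]].

Lemma good_or_stuck : (exists A, good_allocation A) \/ stuck.
Proof.
have rest_pool y : y \in rest s q -> y \in pool s by apply/subsetP/rest_sub.
have [fav_top | fav_top] := eqVneq (fav i (pool s)) (top s q); last first.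
  left; have xP : fav i (pool s) \in pool s := favourite_in _ _ top_in.
  have [y yr yx] := rest_other (fav i (pool s)).
  have xry : fav i (pool s) \in rest s q :\ y.
    by rewrite !inE eq_sym yx fav_top xP.
  apply: (good_i_takes_rest yr).
    exact: le_trans (favourite_max _ _ top_in) (valuation_set1_le hv _ xry).
  apply: le_trans (valuation_set1_le hv _ xry).
  exact: favourite_max _ _ (rest_pool y yr).
have top_i g : g \in pool s -> v1 i g <= v1 i (top s q).
  by rewrite -fav_top; apply: favourite_max.
case: (boolP [exists y in rest s q, v1 q (top s q) <= v q (rest s q :\ y)]).
  by case/existsP => y /andP [yr tq]; left; apply: good_i_takes_top yr tq top_i.
move/existsPn => q_envies.
case: (boolP [exists y in rest s q, v1 i (top s q) <= v i (rest s q :\ y)]).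
  case/existsP => y /andP [yr ti]; left; apply: (good_i_takes_rest yr ti).
  exact: le_trans (top_i y (rest_pool y yr)) ti.
move/existsPn => i_envies.
have lt_envy a y : y \in rest s q ->
    ~~ ((y \in rest s q) && (v1 a (top s q) <= v a (rest s q :\ y))) ->
    v a (rest s q :\ y) < v1 a (top s q).
  by move=> yr; rewrite yr ltNge.
case: (boolP [forall m, forall g, (m \in s) ==> (g \in rest s q) ==>
                (v m (rest s q :\ g) <= v1 m (pick s m))]).
  move/forallP => picks_content; left; apply: good_three_one.
    move=> m g ms gr; move/forallP: (picks_content m) => /(_ g).
    by rewrite ms gr.
  by move=> g gr; apply/ltW/lt_envy/q_envies.
case/forallPn => m /forallPn [g].
rewrite !negb_imply -ltNge => /and3P [ms gr envy].
right; split=> [y yr | y yr |]; last by exists m, g.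
  exact/lt_envy/q_envies.
exact/lt_envy/i_envies.
Qed.

End Order.

Lemma rest_sd_pool s q : rest s q = sd_pool v1 g0 (s ++ [:: q]) setT.
Proof. by rewrite sd_pool_cat. Qed.

Lemma stuck_reorder s q : order_for s q -> stuck s q ->
  exists s' m,
    order_for s' m /\ (stuck s' m -> v1 i (top s' m) < v1 i (top s q)).
Proof.
move=> ord [_ i_envies [m [y0 [ms y0r m_envies]]]].
move: ord i_envies y0r m_envies.
case/splitPr: ms => s1 s2 ord i_envies y0r m_envies.
have [_ _ _ us] := order_forP ord.
have mNs1 : m \notin s1.
  by move: us; rewrite cat_uniq /= negb_or => /and3P [_ /andP [-> _] _].
have ord' : order_for (s1 ++ s2 ++ [:: q]) m.
  apply: perm_trans ord; apply/permP => p /=; rewrite !count_cat /=; lia.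
exists (s1 ++ s2 ++ [:: q]), m; split=> // -[m_top _ _].
have fits : (size (s1 ++ m :: s2 ++ [:: q]) <= #|[set: G]|)%N.
  have := order_for_size ord; rewrite cardsT card_ord !size_cat /= size_cat /=.
  by set k1 := size s1; set k2 := size s2; lia.
have [z zP [zW pool'E]] := sd_pool_drop v1 g0 fits.
rewrite -cat_cons [s1 ++ (m :: s2) ++ _]catA -rest_sd_pool in zW pool'E.
set W := rest _ q in zW pool'E m_envies y0r i_envies.
have z_le_pick : v1 m z <= v1 m (pick (s1 ++ m :: s2) m).
  by rewrite sd_pick_mid //; apply: favourite_max.
have top'z : top (s1 ++ s2 ++ [:: q]) m != z.
  apply/eqP => top'E; have := m_top y0.
  rewrite /rest top'E pool'E setU1K // => /(_ y0r) envy_z.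
  by have := lt_trans envy_z (le_lt_trans z_le_pick m_envies); rewrite ltxx.
have top'W : top (s1 ++ s2 ++ [:: q]) m \in W.
  by move: (top_in ord'); rewrite pool'E in_setU1 (negbTE top'z).
have [y yW yt'] := rest_other ord (top (s1 ++ s2 ++ [:: q]) m).
apply: le_lt_trans (i_envies y yW); apply: (valuation_set1_le hv i).
by rewrite in_setD1 eq_sym yt' top'W.
Qed.

Lemma good_from_order s q : order_for s q -> exists A, good_allocation A.
Proof.
move Ek: (rank_by (v1 i) (top s q)) => k.
elim/ltn_ind: k s q Ek => k IH s q Ek ord.
have [// | st] := good_or_stuck ord.
have [s' [m [ord' decr]]] := stuck_reorder ord st.
have [// | st'] := good_or_stuck ord'.
by apply: (IH _ _ s' m erefl ord'); rewrite -Ek rank_by_lt ?decr.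
Qed.

Lemma exists_order : (1 < n)%N -> exists s q, order_for s q.
Proof.
move=> n_gt1; have [q qi] : exists q : 'I_n, q != i.
  have /card_gt1P [a [b [_ _ ab]]] : (1 < #|'I_n|)%N by rewrite card_ord.
  by case: (eqVneq a i) => [ai | ai]; [exists b; rewrite -ai eq_sym | exists a].
exists (rem q (rem i (enum 'I_n))), q.
have iE : i \in enum 'I_n by rewrite mem_enum.
rewrite /order_for perm_sym; apply: perm_trans (perm_to_rem iE) _.
rewrite perm_cons; apply: perm_to_rem.
by rewrite mem_rem_uniq ?enum_uniq // inE qi mem_enum.
Qed.

Lemma good_single_agent : (n <= 1)%N -> exists A, good_allocation A.
Proof.
move=> n_le1; have all_i (a : 'I_n) : a = i.
  by apply: ord_inj; move: (ltn_ord a) (ltn_ord i); lia.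
exists (fun=> setT); split; [split; [split|] | split].
- by move=> a b; rewrite (all_i a) (all_i b) eqxx.
- by move=> g; exists i; rewrite inE.
- by move=> a b g _; apply/valuation_le/subD1set.
- by move=> k; apply/set0Pn; exists g0; rewrite inE.
- by left; rewrite cardsT card_ord; move: (ltn_ord i); lia.
Qed.

Lemma exists_good_allocation : exists A, good_allocation A.
Proof.
have [n_le1 | n_gt1] := leqP n 1; first exact: good_single_agent.
by have [s [q ord]] := exists_order n_gt1; apply: good_from_order ord.
Qed.

End TwoExtraGoods.

Theorem lemma7 (R : realDomainType) (n : nat) (v : valuation R n (n + 2))
    (hv : monotone_valuations v) (i : 'I_n) :
  exists A : 'I_n -> {set 'I_(n + 2)},
    EFX_allocation v A /\
    (forall k, A k != set0) /\
    (#|A i| = 3%N \/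
     exists j : 'I_n, j != i /\ #|A i| = 2%N /\ #|A j| = 2%N /\
       exists k : 'I_n, (k = i \/ k = j) /\
         exists2 g, g \in A k &
           forall g', g' \in A i :|: A j -> v k [set g'] <= v k [set g]).
Proof. exact: exists_good_allocation. Qed.
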